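(* Let $k\ge 1$ and let $U$ be a nonempty $k$-unitrade. Then $|U|\ge k+1$, and if $|U|=k+1$ or $|{\rm supp}(U)|=k+1$ then $U$ is equivalent to $W_k$.
   Context: A $k$-unitrade on a finite set $V$ is a set $U$ of $k$-element subsets (blocks) of $V$ such that every $(k-1)$-element subset of $V$ is contained in an even number of blocks of $U$. ${\rm supp}(U)=\bigcup_{u\in U}u$. Two collections $U_1$ of subsets of $V_1$ and $U_2$ of subsets of $V_2$ are equivalent if there is an injection $f:V_1\to V_2$ with $U_2=\{f(u): u\in U_1\}$. $W_k$ denotes the set of all $k$-element subsets of a $(k+1)$-element set. *)

From mathcomp Require Import all_boot.
Set Implicit Arguments. Unset Strict Implicit. Unset Printing Implicit Defensive.

Definition unitrade (V : finType) (k : nat) (U : {set {set V}}) : Prop :=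
  (forall u, u \in U -> #|u| = k) /\
  (forall S : {set V}, #|S| = k.-1 -> ~~ odd #|[set u in U | S \subset u]|).

Definition supp (V : finType) (U : {set {set V}}) : {set V} :=
  \bigcup_(u in U) u.

Definition W (k : nat) : {set {set 'I_k.+1}} := [set B : {set 'I_k.+1} | #|B| == k].

Definition equivalent (V1 V2 : finType) (U1 : {set {set V1}}) (U2 : {set {set V2}}) : Prop :=
  exists f : V1 -> V2, injective f /\ U2 = [set f @: u | u : {set V1} in U1].

From mathcomp Require Import all_boot.
Set Implicit Arguments. Unset Strict Implicit. Unset Printing Implicit Defensive.

(* Fix a block u.  For x in u the (k-1)-set u :\ x lies in an even number of
   blocks, hence in a second block, the flip of u at x; the k flips are
   pairwise distinct, so together with u they give k+1 blocks.  If the support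
   has k+1 points, the blocks are at least k+1 of the k+1 k-subsets of the
   support, hence all of them.  If there are exactly k+1 blocks, U consists of
   u and its flips; the second block through the ridge (flip at x0) :\ x can
   then only be the flip at x, which puts every flip into the (k+1)-set
   x0 |: (flip at x0). *)

Lemma cardsD1_pred (T : finType) (A : {set T}) x : x \in A -> #|A :\ x| = #|A|.-1.
Proof. by move=> xA; rewrite (cardsD1 x A) xA. Qed.

Lemma subset_card_setD1 (T : finType) k (A B : {set T}) :
  #|A| = k.+1 -> B \subset A -> #|B| = k -> exists2 z, z \in A & B = A :\ z.
Proof.
move=> card_A BA card_B.
have /cards1P[z ABz] : #|A :\: B| == 1 by rewrite cardsDS // card_A card_B subSnn.
have : z \in A :\: B by rewrite ABz set11.
rewrite inE => /andP[_ zA]; exists z => //.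
by rewrite -ABz setDDr setDv set0U; apply/esym/setIidPr.
Qed.

Lemma family_setD1_eq (T : finType) k (A : {set T}) (X : {set {set T}}) :
  #|A| = k.+1 -> (forall B, B \in X -> B \subset A) ->
  (forall B, B \in X -> #|B| = k) -> k.+1 <= #|X| ->
  X = [set A :\ z | z in A].
Proof.
move=> card_A XA card_X lbound; apply/eqP; rewrite eqEcard; apply/andP; split.
  apply/subsetP => B BX.
  by have [z zA ->] := subset_card_setD1 card_A (XA B BX) (card_X B BX); apply: imset_f.
by apply: leq_trans (leq_imset_card _ _) _; rewrite card_A.
Qed.

Lemma equivalent_W (V : finType) k (U : {set {set V}}) (T : {set V}) :
  #|T| = k.+1 -> (forall v, v \in U -> v \subset T) ->
  (forall v, v \in U -> #|v| = k) -> k.+1 <= #|U| ->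
  equivalent (W k) U.
Proof.
move=> card_T UT card_U lbound.
pose f i := enum_val (cast_ord (esym card_T) i).
have f_inj : injective f by move=> i j /enum_val_inj /cast_ord_inj.
exists f; split => //.
rewrite (family_setD1_eq card_T UT card_U lbound); apply/esym/(family_setD1_eq card_T).
- move=> C /imsetP[B _ ->]; apply/subsetP => y /imsetP[i _ ->]; exact: enum_valP.
- by move=> C /imsetP[B]; rewrite inE => /eqP card_B ->; rewrite card_imset.
- by rewrite card_imset ?card_draws ?card_ord ?binSn //; apply: imset_inj.
Qed.

Lemma unitrade_other_block (V : finType) k (U : {set {set V}}) (S w0 : {set V}) :
  unitrade k U -> #|S| = k.-1 -> w0 \in U -> S \subset w0 ->
  exists w, [&& w \in U, w != w0 & S \subset w].
Proof.
move=> [_ even_U] card_S w0U Sw0.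
case: (pickP (fun w => [&& w \in U, w != w0 & S \subset w])) => [w ?|none].
  by exists w.
suff blocks_S : [set w in U | S \subset w] = [set w0].
  by have := even_U S card_S; rewrite blocks_S cards1.
apply/setP => w; rewrite !inE; have := none w.
by case: eqP => [->|_]; rewrite ?w0U ?Sw0 //= => ->.
Qed.

Section Flips.

Variables (V : finType) (k : nat) (U : {set {set V}}) (u : {set V}).
Hypotheses (HU : unitrade k U) (uU : u \in U).

Let card_block v : v \in U -> #|v| = k.
Proof. by case: HU => card_U _; apply: card_U. Qed.

Lemma block_subset_eq v w : v \in U -> w \in U -> v \subset w -> v = w.
Proof.
move=> vU wU vw; apply/eqP; rewrite eqEcard vw.
by rewrite (card_block vU) (card_block wU) leqnn.
Qed.

Definition flip x := odflt u [pick v | [&& v \in U, v != u & u :\ x \subset v]].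

Lemma flipP x : x \in u -> [/\ flip x \in U, flip x != u & u :\ x \subset flip x].
Proof.
move=> xu; rewrite /flip; case: pickP => [v /and3P[]//|none].
have card_ux : #|u :\ x| = k.-1 by rewrite cardsD1_pred // card_block.
have [v blocks_v] := unitrade_other_block HU card_ux uU (subD1set u x).
by have := none v; rewrite blocks_v.
Qed.

Lemma flip_notin x : x \in u -> x \notin flip x.
Proof.
move=> xu; apply/negP => x_flip; have [flipU flip_neq ux_flip] := flipP xu.
case/negP: flip_neq; apply/eqP/esym/(block_subset_eq uU flipU).
by rewrite -(setD1K xu) subUset sub1set x_flip ux_flip.
Qed.

Lemma mem_flip x y : x \in u -> y \in u -> y != x -> y \in flip x.
Proof. by move=> xu yu yx; have [_ _ /subsetP] := flipP xu; apply; rewrite !inE yx. Qed.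

Lemma flip_inj : {in u &, injective flip}.
Proof.
move=> x y xu yu flip_xy; apply/eqP; apply: contraT => xy.
by have := mem_flip yu xu xy; rewrite -flip_xy (negbTE (flip_notin xu)).
Qed.

Lemma flips_sub : u |: flip @: u \subset U.
Proof.
rewrite subUset sub1set uU; apply/subsetP => _ /imsetP[x xu ->].
by have [] := flipP xu.
Qed.

Lemma card_flips : #|u |: flip @: u| = k.+1.
Proof.
rewrite cardsU1 (card_in_imset flip_inj) card_block //.
suff -> : u \notin flip @: u by [].
apply/imsetP => -[x xu u_flip].
by have [_ + _] := flipP xu; rewrite -u_flip eqxx.
Qed.

Lemma card_apex x0 : x0 \in u -> #|x0 |: flip x0| = k.+1.
Proof.
move=> x0u; have [flipU _ _] := flipP x0u.
by rewrite cardsU1 (negbTE (flip_notin x0u)) card_block.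
Qed.

Hypothesis card_U : #|U| = k.+1.

Lemma flips_eq : U = u |: flip @: u.
Proof. by apply/esym/eqP; rewrite eqEcard flips_sub card_U card_flips /=. Qed.

Lemma flip_ridge x0 x : x0 \in u -> x \in u -> x != x0 -> flip x0 :\ x \subset flip x.
Proof.
move=> x0u xu x_x0; have [flip0U flip0_neq _] := flipP x0u.
have x_flip0 := mem_flip x0u xu x_x0.
have card_ridge : #|flip x0 :\ x| = k.-1 by rewrite cardsD1_pred // card_block.
have [w /and3P[wU w_neq ridge_w]] :=
  unitrade_other_block HU card_ridge flip0U (subD1set _ x).
move: wU; rewrite flips_eq => /setU1P[w_u | /imsetP[z zu w_z]].
  case/negP: flip0_neq; apply/eqP/(block_subset_eq flip0U uU).
  by rewrite -(setD1K x_flip0) subUset sub1set xu -w_u ridge_w.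
have [z_x | z_x] := eqVneq z x; first by move: ridge_w; rewrite w_z z_x.
have z_x0 : z != x0 by apply: contraNneq w_neq => z_x0; rewrite w_z z_x0.
have /(subsetP ridge_w) : z \in flip x0 :\ x by rewrite !inE z_x mem_flip.
by rewrite w_z (negbTE (flip_notin zu)).
Qed.

Lemma flip_sub_apex x0 x : x0 \in u -> x \in u -> flip x \subset x0 |: flip x0.
Proof.
move=> x0u xu; have [-> | x_x0] := eqVneq x x0; first exact: subsetUr.
have [flipU _ _] := flipP xu.
have x_apex : x \in x0 |: flip x0 by rewrite !inE mem_flip ?orbT.
suff <- : (x0 |: flip x0) :\ x = flip x by apply: subD1set.
apply/eqP; rewrite eqEcard cardsD1_pred // card_apex // card_block // leqnn andbT.
rewrite setDUl subUset flip_ridge // andbT; apply/subsetP => y.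
by rewrite !inE => /andP[y_x /eqP y_x0]; rewrite y_x0 in y_x *; apply: mem_flip.
Qed.

Lemma blocks_sub_apex x0 v : x0 \in u -> v \in U -> v \subset x0 |: flip x0.
Proof.
move=> x0u; rewrite flips_eq => /setU1P[-> | /imsetP[x xu ->]].
  by rewrite -(setD1K x0u) setUS //; have [] := flipP x0u.
exact: flip_sub_apex.
Qed.

End Flips.

Theorem proposition9 (V : finType) (k : nat) (U : {set {set V}}) :
  1 <= k -> unitrade k U -> U != set0 ->
  k.+1 <= #|U| /\
  ((#|U| = k.+1 \/ #|supp U| = k.+1) -> equivalent (W k) U).
Proof.
move=> k_gt0 HU /set0Pn[u uU]; have [card_blocks _] := HU.
have lbound : k.+1 <= #|U|.
  by rewrite -(card_flips HU uU); apply/subset_leq_card/(flips_sub HU uU).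
split=> // -[card_U | card_supp].
- have [x0 x0u] : exists x0, x0 \in u.
    by apply/set0Pn; rewrite -card_gt0 card_blocks.
  apply: (equivalent_W (card_apex HU uU x0u) _ card_blocks lbound).
  by move=> v; apply: (blocks_sub_apex HU uU card_U x0u).
- by apply: (equivalent_W card_supp _ card_blocks lbound) => v; apply: bigcup_sup.
Qed.
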